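(* Let $(A,\mathcal H)$ be a left bialgebroid. The assignments $I\mapsto[\pi:\mathcal H\to\mathcal H/I]$ and $[\pi:\mathcal H\to\overline{\mathcal H}]\mapsto\ker(\pi)$ are well-defined, mutually inverse bijections between the set of left ideal two-sided coideals of $\mathcal H$ and the set of quotient left $\mathcal H$-module corings of $\mathcal H$.
   Context: $\Bbbk$ is a field. A left bialgebroid $(A,\mathcal H)$: $\Bbbk$-algebras $A,\mathcal H$, algebra maps $s:A\to\mathcal H$, $t:A^o\to\mathcal H$ with commuting images, $A$-bilinear $\Delta:\mathcal H\to\mathcal H\otimes_A\mathcal H$, $\varepsilon:\mathcal H\to A$ (bimodule structure $a\cdot h\cdot b=s(a)t(b)h$; $\mathcal H\otimes_A\mathcal H$ = quotient of $\mathcal H\otimes\mathcal H$ by span of $t(a)x\otimes y-x\otimes s(a)y$), with $(\mathcal H,\Delta,\varepsilon)$ a coassociative counital $A$-coring, $\Delta$ an algebra map into the Takeuchi product $\{\sum x_i\otimes_Ay_i:\sum x_it(a)\otimes_Ay_i=\sum x_i\otimes_Ay_is(a)\ \forall a\}$, $\varepsilon(xs(\varepsilon(y)))=\varepsilon(xy)=\varepsilon(xt(\varepsilon(y)))$, $\varepsilon(1)=1$; $\Delta(x)=\sum x_1\otimes_Ax_2$. Left $\mathcal H$-modules form a monoidal category: each is an $A$-bimodule via $a\cdot m\cdot b=s(a)t(b)m$, the tensor product $M\otimes_AN$ (quotient of $M\otimes N$ by $t(a)m\otimes n-m\otimes s(a)n$) has action $h(m\otimes n)=\sum h_1m\otimes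 h_2n$, and the unit is $A$ with $h\cdot a=\varepsilon(hs(a))$. A left $\mathcal H$-module coring is a comonoid in this monoidal category; $\mathcal H$ itself is one (regular left action, $\Delta$, $\varepsilon$). A quotient left $\mathcal H$-module coring of $\mathcal H$ is a surjective morphism of left $\mathcal H$-module corings $\pi:\mathcal H\to\overline{\mathcal H}$ (considered up to isomorphism under $\mathcal H$). A left ideal two-sided coideal is a left ideal $I$ with $\varepsilon(I)=0$ and $\Delta(I)\subseteq$ image of $I\otimes_A\mathcal H+\mathcal H\otimes_AI$. *)

(* Left bialgebroids, tensor products over A encoded by
   representatives (finite lists of simple tensors) together with the
   equality of M (x)_A N, defined through its universal property. *)
From HB Require Import structures.
From mathcomp Require Import all_boot all_order all_algebra.
Set Implicit Arguments. Unset Strict Implicit. Unset Printing Implicit Defensive.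
Import GRing.Theory.
Local Open Scope ring_scope.

Section Defs.
Variable k : fieldType.

Definition klinear (U V : lmodType k) (f : U -> V) : Prop :=
  forall (c : k) (x y : U), f (c *: x + y) = c *: f x + f y.

Definition kbilinear (M N W : lmodType k) (b : M -> N -> W) : Prop :=
  (forall n, klinear (fun m => b m n)) /\ (forall m, klinear (b m)).

Definition ktrilinear (M N P W : lmodType k) (g : M -> N -> P -> W) : Prop :=
  (forall n p, klinear (fun m => g m n p)) /\
  (forall m p, klinear (fun n => g m n p)) /\
  (forall m n, klinear (g m n)).

Section Tensor.
Variable A : algType k.

Definition balanced (M N W : lmodType k) (ra : A -> M -> M) (la : A -> N -> N)
  (b : M -> N -> W) : Prop :=
  kbilinear b /\ forall a m n, b (ra a m) n = b m (la a n).

(* Two finite sums of simple tensors  \sum m_i (x) n_i  represent the same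
   element of M (x)_A N (the quotient of M (x)_k N by the span of
   m.a (x) n - m (x) a.n) iff every A-balanced k-bilinear map agrees on them. *)
Definition teq (M N : lmodType k) (ra : A -> M -> M) (la : A -> N -> N)
  (u v : seq (M * N)) : Prop :=
  forall (W : lmodType k) (b : M -> N -> W), balanced ra la b ->
    \sum_(p <- u) b p.1 p.2 = \sum_(p <- v) b p.1 p.2.

Definition balanced3 (M N P W : lmodType k) (ra1 : A -> M -> M)
  (la2 ra2 : A -> N -> N) (la3 : A -> P -> P) (g : M -> N -> P -> W) : Prop :=
  ktrilinear g /\
  (forall a m n p, g (ra1 a m) n p = g m (la2 a n) p) /\
  (forall a m n p, g m (ra2 a n) p = g m n (la3 a p)).

Definition teq3 (M N P : lmodType k) (ra1 : A -> M -> M)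
  (la2 ra2 : A -> N -> N) (la3 : A -> P -> P) (u v : seq (M * N * P)) : Prop :=
  forall (W : lmodType k) (g : M -> N -> P -> W),
    balanced3 ra1 la2 ra2 la3 g ->
    \sum_(p <- u) g p.1.1 p.1.2 p.2 = \sum_(p <- v) g p.1.1 p.1.2 p.2.

End Tensor.

Section Bialgebroid.
Variables (A H : algType k) (s t : A -> H).

Definition tH (u v : seq (H * H)) : Prop :=
  teq (fun a (x : H) => t a * x) (fun a (y : H) => s a * y) u v.
Definition tH3 (u v : seq (H * H * H)) : Prop :=
  teq3 (fun a (x : H) => t a * x) (fun a (y : H) => s a * y)
       (fun a (y : H) => t a * y) (fun a (z : H) => s a * z) u v.

Record is_left_bialgebroid (Delta : H -> seq (H * H)) (eps : H -> A) : Prop := {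
  s_lin : klinear s;
  s_mul : forall a b, s (a * b) = s a * s b;
  s_one : s 1 = 1;
  t_lin : klinear t;
  t_mul : forall a b, t (a * b) = t b * t a;
  t_one : t 1 = 1;
  st_comm : forall a b, s a * t b = t b * s a;
  Delta_lin : forall (c : k) x y,
    tH (Delta (c *: x + y)) ([seq (c *: p.1, p.2) | p <- Delta x] ++ Delta y);
  Delta_bilin : forall a b x,
    tH (Delta (s a * t b * x)) [seq (s a * p.1, t b * p.2) | p <- Delta x];
  eps_lin : klinear eps;
  eps_bilin : forall a b x, eps (s a * t b * x) = a * eps x * b;
  Delta_coassoc : forall x,
    tH3 [seq (q.1, q.2, p.2) | p <- Delta x, q <- Delta p.1]
        [seq (p.1, q.1, q.2) | p <- Delta x, q <- Delta p.2];
  (* counitality, via A (x)_A H = H and H (x)_A A = H *)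
  Delta_counitl : forall x, \sum_(p <- Delta x) s (eps p.1) * p.2 = x;
  Delta_counitr : forall x, \sum_(p <- Delta x) t (eps p.2) * p.1 = x;
  (* Delta lands in the Takeuchi product and is an algebra map into it *)
  Delta_takeuchi : forall x a,
    tH [seq (p.1 * t a, p.2) | p <- Delta x] [seq (p.1, p.2 * s a) | p <- Delta x];
  Delta_mul : forall x y,
    tH (Delta (x * y)) [seq (p.1 * q.1, p.2 * q.2) | p <- Delta x, q <- Delta y];
  Delta_one : tH (Delta 1) [:: (1, 1)];
  eps_s : forall x y, eps (x * s (eps y)) = eps (x * y);
  eps_t : forall x y, eps (x * t (eps y)) = eps (x * y);
  eps_one : eps 1 = 1
}.

Variables (Delta : H -> seq (H * H)) (eps : H -> A).

Definition is_Hmod (M : lmodType k) (act : H -> M -> M) : Prop :=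
  kbilinear act /\ (forall m, act 1 m = m) /\
  (forall x y m, act (x * y) m = act x (act y m)).

Definition tM (M : lmodType k) (act : H -> M -> M) (u v : seq (M * M)) : Prop :=
  teq (fun a m => act (t a) m) (fun a n => act (s a) n) u v.
Definition tM3 (M : lmodType k) (act : H -> M -> M) (u v : seq (M * M * M)) :=
  teq3 (fun a m => act (t a) m) (fun a n => act (s a) n)
       (fun a n => act (t a) n) (fun a p => act (s a) p) u v.

(* A quotient left H-module coring of H: a left H-module coring
   (comonoid in the monoidal category of left H-modules) Hb together with a
   surjective morphism of left H-module corings pi : H -> Hb. *)
Record is_qmc (Hb : lmodType k) (act : H -> Hb -> Hb) (pi : H -> Hb)
    (D : Hb -> seq (Hb * Hb)) (e : Hb -> A) : Prop := {
  q_mod : is_Hmod act;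
  q_D_lin : forall (c : k) m n,
    tM act (D (c *: m + n)) ([seq (c *: p.1, p.2) | p <- D m] ++ D n);
  q_D_H : forall h m,
    tM act (D (act h m)) [seq (act p.1 q.1, act p.2 q.2) | p <- Delta h, q <- D m];
  (* e : Hb -> A is a morphism of left H-modules (h.a = eps (h s(a))) *)
  q_e_lin : klinear e;
  q_e_H : forall h m, e (act h m) = eps (h * s (e m));
  q_coassoc : forall m,
    tM3 act [seq (q.1, q.2, p.2) | p <- D m, q <- D p.1]
            [seq (p.1, q.1, q.2) | p <- D m, q <- D p.2];
  q_counitl : forall m, \sum_(p <- D m) act (s (e p.1)) p.2 = m;
  q_counitr : forall m, \sum_(p <- D m) act (t (e p.2)) p.1 = m;
  q_pi_lin : klinear pi;
  q_pi_H : forall h x, pi (h * x) = act h (pi x);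
  q_pi_surj : forall y, exists x, pi x = y;
  q_pi_D : forall x, tM act (D (pi x)) [seq (pi p.1, pi p.2) | p <- Delta x];
  q_pi_e : forall x, e (pi x) = eps x
}.

Record qmc := QMC {
  qcar : lmodType k;
  qact : H -> qcar -> qcar;
  qpi : H -> qcar;
  qD : qcar -> seq (qcar * qcar);
  qe : qcar -> A;
  qax : is_qmc qact qpi qD qe
}.

Arguments qact : clear implicits.
Arguments qD : clear implicits.
Arguments qe : clear implicits.
Arguments qpi : clear implicits.

Definition qker (Q : qmc) : H -> Prop := fun x => qpi Q x = 0.

Definition qmc_iso (Q1 Q2 : qmc) : Prop :=
  exists f : qcar Q1 -> qcar Q2,
    klinear f /\ bijective f /\
    (forall x, f (qpi Q1 x) = qpi Q2 x) /\
    (forall h m, f (qact Q1 h m) = qact Q2 h (f m)) /\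
    (forall m, tM (qact Q2) (qD Q2 (f m)) [seq (f p.1, f p.2) | p <- qD Q1 m]) /\
    (forall m, qe Q2 (f m) = qe Q1 m).

Definition is_lid_coideal (I : H -> Prop) : Prop :=
  I 0 /\ (forall x y, I x -> I y -> I (x - y)) /\
  (forall h x, I x -> I (h * x)) /\
  (forall x, I x -> eps x = 0) /\
  (forall x, I x -> exists u : seq (H * H),
      (forall p, p \in u -> I p.1 \/ I p.2) /\ tH (Delta x) u).

End Bialgebroid.
End Defs.

From HB Require Import structures.
From mathcomp Require Import all_boot all_order all_algebra.
From mathcomp Require Import boolp.
Set Implicit Arguments. Unset Strict Implicit. Unset Printing Implicit Defensive.
Import GRing.Theory.
Local Open Scope ring_scope.

(* A quotient [pi : H -> Hb] is determined by its kernel [I], because [Hb] is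
   then [H/I] with the action, comultiplication and counit induced from [H].
   Conversely, if [I] is a left ideal two-sided coideal then [H I], [Delta I]
   and [eps I] lie in the kernels [I], [I (x)_A H + H (x)_A I] and [0] of the
   maps to be induced, so [H/I] inherits these structures.  That the kernel of
   a quotient is a coideal is the one non-formal point: for [x] in [I],
   [(pi (x) pi) (Delta x) = Delta_b (pi x) = 0], and the kernel of
   [pi (x)_A pi] is [I (x)_A H + H (x)_A I]; this is seen on the balanced map
   [H x H -> (H (x)_A H) / (I (x)_A H + H (x)_A I)], which factors through
   [Hb x Hb].  Tensor products over [A] are given by their universal property,
   so this target is built as a quotient of lists of simple tensors. *)

Section KLinear.
Variables (k : fieldType) (U V : lmodType k) (f : U -> V).
Hypothesis f_lin : klinear f.

Lemma klinear0 : f 0 = 0.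
Proof.
by move: (f_lin 1 0 0); rewrite scaler0 addr0 scale1r -{1}[f 0]addr0 => /addrI <-.
Qed.

Lemma klinearD x y : f (x + y) = f x + f y.
Proof. by have := f_lin 1 x y; rewrite !scale1r. Qed.

Lemma klinearZ c x : f (c *: x) = c *: f x.
Proof. by have := f_lin c x 0; rewrite !addr0 klinear0 addr0. Qed.

Lemma klinearB x y : f (x - y) = f x - f y.
Proof. by rewrite klinearD -scaleN1r klinearZ scaleN1r. Qed.

Lemma klinear_sum (I : Type) (r : seq I) (F : I -> U) :
  f (\sum_(i <- r) F i) = \sum_(i <- r) f (F i).
Proof.
by elim: r => [|i r IHr]; rewrite ?big_nil ?klinear0 // !big_cons klinearD IHr.
Qed.

End KLinear.

(* [big_cat] states the sum over [r1 ++ r2] with the addition of the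
   monoid-law instance, on which ring lemmas such as [addrC] cannot key. *)
Lemma sumr_cat (V : nmodType) (I : Type) (r1 r2 : seq I) (F : I -> V) :
  \sum_(i <- r1 ++ r2) F i = \sum_(i <- r1) F i + \sum_(i <- r2) F i.
Proof. exact: big_cat. Qed.

Lemma big_scale_fst (k : fieldType) (M N W : lmodType k) (b : M -> N -> W)
    (b_lin : forall n, klinear (b^~ n)) c (v : seq (M * N)) :
  \sum_(p <- [seq (c *: p.1, p.2) | p <- v]) b p.1 p.2 =
  c *: \sum_(p <- v) b p.1 p.2.
Proof.
by rewrite big_map scaler_sumr; apply: eq_bigr => p _; rewrite (klinearZ (b_lin _)).
Qed.

Record lmod_setoid (k : fieldType) := LmodSetoid {
  ls_car : Type;
  ls_eq : ls_car -> ls_car -> Prop;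
  ls_zero : ls_car;
  ls_add : ls_car -> ls_car -> ls_car;
  ls_scale : k -> ls_car -> ls_car;
  ls_eq_refl : forall x, ls_eq x x;
  ls_eq_sym : forall x y, ls_eq x y -> ls_eq y x;
  ls_eq_trans : forall x y z, ls_eq x y -> ls_eq y z -> ls_eq x z;
  ls_add_eq : forall x x' y y', ls_eq x x' -> ls_eq y y' ->
    ls_eq (ls_add x y) (ls_add x' y');
  ls_scale_eq : forall c x x', ls_eq x x' -> ls_eq (ls_scale c x) (ls_scale c x');
  ls_addA : forall x y z, ls_eq (ls_add x (ls_add y z)) (ls_add (ls_add x y) z);
  ls_addC : forall x y, ls_eq (ls_add x y) (ls_add y x);
  ls_add0 : forall x, ls_eq (ls_add ls_zero x) x;
  ls_addN : forall x, ls_eq (ls_add (ls_scale (-1) x) x) ls_zero;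
  ls_scaleA : forall a b x, ls_eq (ls_scale a (ls_scale b x)) (ls_scale (a * b) x);
  ls_scale1 : forall x, ls_eq (ls_scale 1 x) x;
  ls_scaleDr : forall a x y,
    ls_eq (ls_scale a (ls_add x y)) (ls_add (ls_scale a x) (ls_scale a y));
  ls_scaleDl : forall a b x,
    ls_eq (ls_scale (a + b) x) (ls_add (ls_scale a x) (ls_scale b x))
}.

Section SetoidQuotient.
Variables (k : fieldType) (L : lmod_setoid k).
Local Notation T := (ls_car L).
Local Notation R := (@ls_eq k L).

(* A class is represented by the predicate [R x]; [cid] picks representatives. *)
Definition quot : Type := {P : T -> Prop | exists x, P = R x}.
Definition qclass (x : T) : quot := exist _ (R x) (ex_intro _ x erefl).
Definition qrepr (q : quot) : T := projT1 (cid (proj2_sig q)).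

Lemma qclass_eq x y : qclass x = qclass y <-> R x y.
Proof.
split=> [/(congr1 (@proj1_sig _ _)) /= -> | xy]; first exact: ls_eq_refl.
have Rxy : R x = R y.
  apply: funext => z; apply: propext; split => [xz | yz].
    exact: ls_eq_trans (ls_eq_sym xy) xz.
  exact: ls_eq_trans xy yz.
rewrite /qclass; move: (ex_intro _ x erefl : exists z, R x = R z).
by rewrite Rxy => ex; congr exist; apply: Prop_irrelevance.
Qed.

Lemma qreprK q : qclass (qrepr q) = q.
Proof.
rewrite /qrepr; case: (cid _) => x /=.
by case: q => P ? /= PR; subst P; congr exist; apply: Prop_irrelevance.
Qed.

Lemma qrepr_class x : R (qrepr (qclass x)) x.
Proof. by apply/qclass_eq; rewrite qreprK. Qed.

Definition qadd p q := qclass (ls_add (qrepr p) (qrepr q)).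
Definition qscale c q := qclass (ls_scale c (qrepr q)).

Lemma qaddE x y : qadd (qclass x) (qclass y) = qclass (ls_add x y).
Proof. by apply/qclass_eq; apply: ls_add_eq; apply: qrepr_class. Qed.

Lemma qscaleE c x : qscale c (qclass x) = qclass (ls_scale c x).
Proof. by apply/qclass_eq; apply: ls_scale_eq; apply: qrepr_class. Qed.

HB.instance Definition _ := gen_eqMixin quot.
HB.instance Definition _ := gen_choiceMixin quot.

Lemma qaddA : associative qadd.
Proof.
move=> p q r; rewrite -(qreprK p) -(qreprK q) -(qreprK r) !qaddE.
by apply/qclass_eq; apply: ls_addA.
Qed.

Lemma qaddC : commutative qadd.
Proof.
by move=> p q; rewrite -(qreprK p) -(qreprK q) !qaddE; apply/qclass_eq/ls_addC.
Qed.

Lemma qadd0 : left_id (qclass (ls_zero L)) qadd.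
Proof. by move=> q; rewrite -(qreprK q) qaddE; apply/qclass_eq/ls_add0. Qed.

Lemma qaddN : left_inverse (qclass (ls_zero L)) (qscale (-1)) qadd.
Proof.
by move=> q; rewrite -(qreprK q) qscaleE qaddE; apply/qclass_eq/ls_addN.
Qed.

HB.instance Definition _ := GRing.isZmodule.Build quot qaddA qaddC qadd0 qaddN.

Lemma qclassD x y : qclass (ls_add x y) = qclass x + qclass y.
Proof. by rewrite -qaddE. Qed.

Lemma qscaleA a b q : qscale a (qscale b q) = qscale (a * b) q.
Proof. by rewrite -(qreprK q) !qscaleE; apply/qclass_eq/ls_scaleA. Qed.

Lemma qscale1 : left_id 1 qscale.
Proof. by move=> q; rewrite -(qreprK q) qscaleE; apply/qclass_eq/ls_scale1. Qed.

Lemma qscaleDr : right_distributive qscale +%R.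
Proof.
move=> a p q; rewrite -(qreprK p) -(qreprK q) -qclassD !qscaleE -qclassD.
by apply/qclass_eq/ls_scaleDr.
Qed.

Lemma qscaleDl q : {morph qscale^~ q : a b / a + b}.
Proof.
by move=> a b; rewrite -(qreprK q) !qscaleE -qclassD; apply/qclass_eq/ls_scaleDl.
Qed.

HB.instance Definition _ :=
  GRing.Zmodule_isLmodule.Build k quot qscaleA qscale1 qscaleDr qscaleDl.

Lemma qclass0 : qclass (ls_zero L) = 0.
Proof. by []. Qed.

Lemma qclassZ c x : qclass (ls_scale c x) = c *: qclass x.
Proof. by rewrite -qscaleE. Qed.

End SetoidQuotient.

Record is_subspace (k : fieldType) (V : lmodType k) (S : V -> Prop) : Prop :=
  IsSubspace {
    subspace0 : S 0;
    subspaceB : forall x y, S x -> S y -> S (x - y);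
    subspaceZ : forall c x, S x -> S (c *: x)
  }.

Section SubspaceQuotient.
Variables (k : fieldType) (V : lmodType k) (S : V -> Prop).
Hypothesis S_subspace : is_subspace S.

Lemma subspaceN x : S x -> S (- x).
Proof. by rewrite -scaleN1r; apply: subspaceZ. Qed.

Lemma subspaceD x y : S x -> S y -> S (x + y).
Proof. by move=> Sx Sy; rewrite -[y]opprK; apply: subspaceB (subspaceN _). Qed.

Lemma subspace_subr x y : x = y -> S (x - y).
Proof. by move=> ->; rewrite subrr; apply: subspace0. Qed.

Definition subspace_setoid : lmod_setoid k.
Proof.
refine (@LmodSetoid k V (fun x y => S (x - y)) 0 +%R *:%R
  _ _ _ _ _ _ _ _ _ _ _ _ _) => /=.
- by move=> x; apply: subspace_subr.
- by move=> x y Sxy; rewrite -opprB; apply: subspaceN.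
- by move=> x y z Sxy Syz; rewrite -[x](subrK y) -addrA; apply: subspaceD.
- by move=> x x' y y' Sx Sy; rewrite opprD addrACA; apply: subspaceD.
- by move=> c x x' Sx; rewrite -scalerBr; apply: subspaceZ.
- by move=> x y z; apply/subspace_subr/addrA.
- by move=> x y; apply/subspace_subr/addrC.
- by move=> x; apply/subspace_subr/add0r.
- by move=> x; apply/subspace_subr; rewrite scaleN1r addNr.
- by move=> a b x; apply/subspace_subr/scalerA.
- by move=> x; apply/subspace_subr/scale1r.
- by move=> a x y; apply/subspace_subr/scalerDr.
- by move=> a b x; apply/subspace_subr/scalerDl.
Defined.

Definition subquot : lmodType k := quot subspace_setoid.
Definition subproj (x : V) : subquot := @qclass _ subspace_setoid x.
Definition subrepr (q : subquot) : V := qrepr q.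

Lemma subproj_eq x y : subproj x = subproj y <-> S (x - y).
Proof. exact: (@qclass_eq _ subspace_setoid x y). Qed.

Lemma subreprK q : subproj (subrepr q) = q.
Proof. exact: qreprK. Qed.

Lemma subrepr_proj x : S (subrepr (subproj x) - x).
Proof. exact: (@qrepr_class _ subspace_setoid x). Qed.

Lemma subproj_linear : klinear subproj.
Proof. by move=> c x y; rewrite /subproj -qclassZ -qclassD. Qed.

Lemma subproj_ker x : subproj x = 0 <-> S x.
Proof. by rewrite -(klinear0 subproj_linear) subproj_eq subr0. Qed.

End SubspaceQuotient.

Section HModules.
Variables (k : fieldType) (A H : algType k) (s t : A -> H).

Definition Hbalanced (M W : lmodType k) (act : H -> M -> M) (b : M -> M -> W) :=
  balanced (fun a m => act (t a) m) (fun a n => act (s a) n) b.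

Definition Hbalanced3 (M W : lmodType k) (act : H -> M -> M)
    (g : M -> M -> M -> W) :=
  balanced3 (fun a m => act (t a) m) (fun a n => act (s a) n)
    (fun a n => act (t a) n) (fun a p => act (s a) p) g.

Lemma Hbalanced_postcomp (M W W' : lmodType k) (act : H -> M -> M)
    (b : M -> M -> W) (g : W -> W') :
  klinear g -> Hbalanced act b -> Hbalanced act (fun m n => g (b m n)).
Proof.
move=> g_lin [[bl br] bb]; split; first split.
- by move=> n c x y /=; rewrite bl g_lin.
- by move=> m c x y /=; rewrite br g_lin.
- by move=> a m n /=; rewrite bb.
Qed.

Section Pullback.
Variables (M1 M2 : lmodType k) (act1 : H -> M1 -> M1) (act2 : H -> M2 -> M2).
Variable f : M1 -> M2.
Hypotheses (f_lin : klinear f) (f_H : forall h m, f (act1 h m) = act2 h (f m)).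

Lemma Hbalanced_comp (W : lmodType k) (b : M2 -> M2 -> W) :
  Hbalanced act2 b -> Hbalanced act1 (fun y z => b (f y) (f z)).
Proof.
move=> [[bl br] bb]; split; first split.
- by move=> n c x y /=; rewrite f_lin; apply: bl.
- by move=> m c x y /=; rewrite f_lin; apply: br.
- by move=> a m n /=; rewrite !f_H bb.
Qed.

Lemma Hbalanced3_comp (W : lmodType k) (g : M2 -> M2 -> M2 -> W) :
  Hbalanced3 act2 g -> Hbalanced3 act1 (fun x y z => g (f x) (f y) (f z)).
Proof.
move=> [[g1 [g2 g3]] [b1 b2]]; split; first split; last split.
- by move=> n p c x y /=; rewrite f_lin; apply: g1.
- by split=> m p c x y /=; rewrite f_lin; [apply: g2 | apply: g3].
- by move=> a m n p /=; rewrite !f_H b1.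
- by move=> a m n p /=; rewrite !f_H b2.
Qed.

Lemma tM_map u v : tM s t act1 u v ->
  tM s t act2 [seq (f p.1, f p.2) | p <- u] [seq (f p.1, f p.2) | p <- v].
Proof. by move=> uv W b bb; rewrite !big_map; apply: uv (Hbalanced_comp bb). Qed.

End Pullback.

Section Balanced3.
Variables (M W : lmodType k) (act : H -> M -> M) (g : M -> M -> M -> W).
Hypothesis g_bal : Hbalanced3 act g.

Lemma Hbalanced3_fix3 p : Hbalanced act (fun m n => g m n p).
Proof.
case: g_bal => [[g1 [g2 _]] [b1 _]].
by split; first split; move=> *; [apply: g1 | apply: g2 | apply: b1].
Qed.

Lemma Hbalanced3_fix1 m : Hbalanced act (g m).
Proof.
case: g_bal => [[_ [g2 g3]] [_ b2]].
by split; first split; move=> *; [apply: g2 | apply: g3 | apply: b2].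
Qed.

End Balanced3.

Section Factor.
Variables (M W : lmodType k) (act : H -> M -> M) (pi : H -> M) (pre : M -> H).
Hypotheses (pi_lin : klinear pi) (pi_H : forall h x, pi (h * x) = act h (pi x)).
Hypothesis preK : forall m, pi (pre m) = m.
Variable beta : H -> H -> W.
Hypothesis beta_bal : Hbalanced *%R beta.
Hypothesis beta_pi : forall y y' z z', pi y = pi y' -> pi z = pi z' ->
  beta y z = beta y' z'.

Lemma Hbalanced_factor : Hbalanced act (fun m n => beta (pre m) (pre n)).
Proof.
have [[bl br] bb] := beta_bal.
split; first split.
- move=> n c m m' /=; rewrite -bl; apply: beta_pi => //.
  by rewrite pi_lin !preK.
- move=> m c n n' /=; rewrite -br; apply: beta_pi => //.
  by rewrite pi_lin !preK.
- move=> a m n /=.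
  rewrite (@beta_pi _ (t a * pre m) _ (pre n)) ?pi_H ?preK // bb.
  by apply: beta_pi; rewrite ?pi_H ?preK.
Qed.

Lemma Hbalanced_factorE y z : beta (pre (pi y)) (pre (pi z)) = beta y z.
Proof. by apply: beta_pi; rewrite preK. Qed.

End Factor.

End HModules.

Section Tensor.
Variables (k : fieldType) (A H : algType k) (s t : A -> H).

Definition tensor_setoid : lmod_setoid k.
Proof.
refine (@LmodSetoid k (seq (H * H)) (tH s t) [::] cat
  (fun c v => [seq (c *: p.1, p.2) | p <- v]) _ _ _ _ _ _ _ _ _ _ _ _ _).
- by [].
- by move=> u v uv W b bb; rewrite (uv W b bb).
- by move=> u v w uv vw W b bb; rewrite (uv W b bb) (vw W b bb).
- by move=> u u' v v' uu' vv' W b bb; rewrite !sumr_cat (uu' W b bb) (vv' W b bb).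
- move=> c u u' uu' W b bb.
  by rewrite !(big_scale_fst bb.1.1) (uu' W b bb).
- by move=> u v w W b bb; rewrite catA.
- by move=> u v W b bb; rewrite !sumr_cat addrC.
- by [].
- move=> u W b bb.
  by rewrite sumr_cat (big_scale_fst bb.1.1) scaleN1r addNr big_nil.
- move=> a c u W b bb.
  by rewrite !(big_scale_fst bb.1.1) scalerA.
- by move=> u W b bb; rewrite (big_scale_fst bb.1.1) scale1r.
- by move=> a u v W b bb; rewrite map_cat.
- move=> a c u W b bb.
  by rewrite sumr_cat !(big_scale_fst bb.1.1) scalerDl.
Defined.

Definition tensor : lmodType k := quot tensor_setoid.
Definition tclass (v : seq (H * H)) : tensor := @qclass _ tensor_setoid v.
Definition tmul (y z : H) : tensor := tclass [:: (y, z)].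

Lemma tclass_eq u v : tclass u = tclass v <-> tH s t u v.
Proof. exact: (@qclass_eq _ tensor_setoid u v). Qed.

Lemma tclass_cat u v : tclass (u ++ v) = tclass u + tclass v.
Proof. exact: qclassD. Qed.

Lemma tclass_scale c v : tclass [seq (c *: p.1, p.2) | p <- v] = c *: tclass v.
Proof. exact: qclassZ. Qed.

Lemma tclass_sum v : tclass v = \sum_(p <- v) tmul p.1 p.2.
Proof.
elim: v => [|[y z] v IHv]; first by rewrite big_nil; apply: qclass0.
by rewrite big_cons -IHv -tclass_cat.
Qed.

Lemma tmul_balanced : Hbalanced s t *%R tmul.
Proof.
split; first split.
- move=> n c x y; rewrite /tmul -tclass_scale -tclass_cat.
  by apply/tclass_eq => W b [[bl _] _]; rewrite sumr_cat (big_scale_fst bl) !big_seq1 bl.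
- move=> m c x y; rewrite /tmul -tclass_scale -tclass_cat.
  apply/tclass_eq => W b [[bl br] _].
  by rewrite sumr_cat (big_scale_fst bl) !big_seq1 br.
- by move=> a m n; apply/tclass_eq => W b [_ bb]; rewrite !big_seq1 bb.
Qed.

Definition some_factor_in (J : H -> Prop) (u : seq (H * H)) :=
  forall p, p \in u -> J p.1 \/ J p.2.

Definition span_JH_HJ (J : H -> Prop) (w : tensor) :=
  exists2 u, some_factor_in J u & tclass u = w.

Lemma some_factor_in_scale (J : H -> Prop) c u :
  (forall x, J x -> J (c *: x)) -> some_factor_in J u ->
  some_factor_in J [seq (c *: p.1, p.2) | p <- u].
Proof. by move=> JZ Ju p /mapP [q /Ju [Jq | Jq] ->]; [left; apply: JZ | right]. Qed.

Lemma span_JH_HJ_subspace (J : H -> Prop) :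
  (forall c x, J x -> J (c *: x)) -> is_subspace (span_JH_HJ J).
Proof.
move=> JZ; split.
- by exists [::] => //; apply: qclass0.
- move=> _ _ [u Ju <-] [v Jv <-].
  exists (u ++ [seq ((-1) *: p.1, p.2) | p <- v]).
    move=> p; rewrite mem_cat => /orP [/Ju // | ].
    exact: (some_factor_in_scale (JZ _) Jv).
  by rewrite tclass_cat tclass_scale scaleN1r.
- move=> c _ [u Ju <-]; exists [seq (c *: p.1, p.2) | p <- u].
    exact: (some_factor_in_scale (JZ _) Ju).
  exact: tclass_scale.
Qed.

End Tensor.

Section QuotientCorings.
Variables (k : fieldType) (A H : algType k) (s t : A -> H)
  (Delta : H -> seq (H * H)) (eps : H -> A).

Definition qpre (Q : qmc s t Delta eps) (m : qcar Q) : H :=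
  projT1 (cid (q_pi_surj (qax Q) m)).

Lemma qpreK (Q : qmc s t Delta eps) m : qpi Q (qpre m) = m.
Proof. by rewrite /qpre; case: cid. Qed.

Lemma qpi_eq (Q : qmc s t Delta eps) x y : qpi Q x = qpi Q y <-> qker Q (x - y).
Proof.
rewrite /qker (klinearB (q_pi_lin (qax Q))).
by split=> [-> | /eqP]; [rewrite subrr | rewrite subr_eq0 => /eqP].
Qed.

Section KernelCoideal.
Variable Q : qmc s t Delta eps.
Local Notation pi := (qpi Q).
Local Notation act := (qact (q:=Q)).
Let pi_lin := q_pi_lin (qax Q).

Lemma qkerZ c x : qker Q x -> qker Q (c *: x).
Proof. by rewrite /qker (klinearZ pi_lin) => ->; rewrite scaler0. Qed.

Let W := subquot (span_JH_HJ_subspace s t qkerZ).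

(* [y (x) z] modulo [I (x)_A H + H (x)_A I], for [I = ker pi]: a balanced map
   that only depends on [pi y] and [pi z], hence factors through [Hb x Hb]. *)
Definition tmul_mod_qker (y z : H) : W := subproj _ (tmul s t y z).

Lemma tmul_mod_qker_balanced : Hbalanced s t *%R tmul_mod_qker.
Proof. exact: (Hbalanced_postcomp (subproj_linear _) (tmul_balanced s t)). Qed.

Lemma tmul_mod_qker_pi y y' z z' : pi y = pi y' -> pi z = pi z' ->
  tmul_mod_qker y z = tmul_mod_qker y' z'.
Proof.
move=> /qpi_eq Iy /qpi_eq Iz; apply/subproj_eq.
have [[tl tr] _] := tmul_balanced s t.
exists [:: (y - y', z); (y', z - z')].
  by move=> p; rewrite !inE => /orP [] /eqP -> /=; [left | right].
rewrite tclass_sum !big_cons big_nil addr0 /=.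
by rewrite (klinearB (tl z)) (klinearB (tr y')) addrA subrK.
Qed.

Lemma big_qD0 (V : lmodType k) (b : qcar Q -> qcar Q -> V) :
  Hbalanced s t act b -> \sum_(p <- qD 0) b p.1 p.2 = 0.
Proof.
move=> bb; have := q_D_lin (qax Q) 1 0 0 bb.
rewrite scaler0 addr0 sumr_cat (big_scale_fst bb.1.1) scale1r.
by rewrite -{1}[\sum_(p <- _) _]addr0 => /addrI <-.
Qed.

Lemma qker_coideal x : qker Q x ->
  exists u, some_factor_in (qker Q) u /\ tH s t (Delta x) u.
Proof.
rewrite /qker => pix0.
have bal := Hbalanced_factor pi_lin (q_pi_H (qax Q)) (@qpreK Q)
  tmul_mod_qker_balanced tmul_mod_qker_pi.
have := q_pi_D (qax Q) x bal.
rewrite pix0 (big_qD0 bal) big_map.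
under eq_bigr do rewrite (Hbalanced_factorE (@qpreK Q) tmul_mod_qker_pi).
rewrite -(klinear_sum (subproj_linear _)) -tclass_sum.
move=> /esym /subproj_ker [u Iu /tclass_eq uD].
by exists u; split=> // V b bb; rewrite (uD V b bb).
Qed.

Lemma qker_lid_coideal : is_lid_coideal s t Delta eps (qker Q).
Proof.
split; [|split; [|split; [|split]]].
- exact: klinear0 pi_lin.
- by move=> x y; rewrite /qker (klinearB pi_lin) => -> ->; rewrite subrr.
- move=> h x; rewrite /qker (q_pi_H (qax Q)) => ->.
  exact: klinear0 ((q_mod (qax Q)).1.2 h).
- by move=> x; rewrite /qker -(q_pi_e (qax Q)) => ->; apply: klinear0 (q_e_lin (qax Q)).
- exact: qker_coideal.
Qed.

End KernelCoideal.
End QuotientCorings.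

Section QuotientByCoideal.
Variables (k : fieldType) (A H : algType k) (s t : A -> H)
  (Delta : H -> seq (H * H)) (eps : H -> A).
Hypothesis HB : is_left_bialgebroid s t Delta eps.
Variable I : H -> Prop.
Hypotheses (I0 : I 0) (IB : forall x y, I x -> I y -> I (x - y))
  (IM : forall h x, I x -> I (h * x)) (I_eps : forall x, I x -> eps x = 0)
  (I_coideal : forall x, I x ->
     exists u, some_factor_in I u /\ tH s t (Delta x) u).

Lemma lid_subspace : is_subspace I.
Proof. by split=> // c x Ix; rewrite -[x]mul1r scalerAl; apply: IM. Qed.

Local Notation Hb := (subquot lid_subspace).
Local Notation pc := (subproj lid_subspace).
Local Notation rp := (@subrepr _ _ _ lid_subspace).

Definition quot_act (h : H) (q : Hb) : Hb := pc (h * rp q).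
Definition quot_D (q : Hb) : seq (Hb * Hb) :=
  [seq (pc p.1, pc p.2) | p <- Delta (rp q)].
Definition quot_eps (q : Hb) : A := eps (rp q).

Lemma pc_surj q : exists x, pc x = q.
Proof. by exists (rp q); apply: subreprK. Qed.

Lemma quot_actE h x : quot_act h (pc x) = pc (h * x).
Proof. by apply/subproj_eq; rewrite -mulrBr; apply: IM; apply: subrepr_proj. Qed.

Lemma quot_epsE x : quot_eps (pc x) = eps x.
Proof.
apply/eqP; rewrite /quot_eps -subr_eq0 -(klinearB (eps_lin HB)).
by rewrite I_eps //; apply: subrepr_proj.
Qed.

Lemma big_Delta_congr (V : lmodType k) (b : H -> H -> V) :
  Hbalanced s t *%R b -> (forall y z, I y \/ I z -> b y z = 0) ->
  forall x x', I (x - x') ->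
  \sum_(p <- Delta x) b p.1 p.2 = \sum_(p <- Delta x') b p.1 p.2.
Proof.
move=> bb b_I x x' Ixx'.
have := Delta_lin HB 1 (x - x') x' bb.
rewrite scale1r subrK => ->; rewrite sumr_cat (big_scale_fst bb.1.1) scale1r.
have [u [Iu /(_ V b bb) ->]] := I_coideal Ixx'.
by rewrite big_seq big1 ?add0r // => p /Iu /b_I.
Qed.

Lemma Hbalanced_pc (V : lmodType k) (b : Hb -> Hb -> V) :
  Hbalanced s t quot_act b -> Hbalanced s t *%R (fun y z => b (pc y) (pc z)).
Proof.
by apply: Hbalanced_comp; [apply: subproj_linear | move=> h x; rewrite quot_actE].
Qed.

Lemma Hbalanced_pc_vanish (V : lmodType k) (b : Hb -> Hb -> V) :
  Hbalanced s t quot_act b -> forall y z, I y \/ I z -> b (pc y) (pc z) = 0.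
Proof.
move=> [[bl br] _] y z [] /(subproj_ker lid_subspace) ->.
  exact: klinear0 (bl _).
exact: klinear0 (br _).
Qed.

Lemma big_quot_D (V : lmodType k) (b : Hb -> Hb -> V) :
  Hbalanced s t quot_act b -> forall x,
  \sum_(p <- quot_D (pc x)) b p.1 p.2 = \sum_(p <- Delta x) b (pc p.1) (pc p.2).
Proof.
move=> bb x; rewrite big_map /=.
exact: big_Delta_congr (Hbalanced_pc bb) (Hbalanced_pc_vanish bb) _ _ (subrepr_proj _ x).
Qed.

Lemma quot_act_Hmod : is_Hmod quot_act.
Proof.
split; first split; last split.
- move=> q c h h'; have [x <-] := pc_surj q.
  by rewrite /= !quot_actE mulrDl -scalerAl subproj_linear.
- move=> h c q q'; have [x <-] := pc_surj q; have [y <-] := pc_surj q'.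
  by rewrite -subproj_linear !quot_actE mulrDr -scalerAr subproj_linear.
- by move=> q; have [x <-] := pc_surj q; rewrite quot_actE mul1r.
- by move=> h h' q; have [x <-] := pc_surj q; rewrite !quot_actE mulrA.
Qed.

Lemma quot_D_linear c m n : tM s t quot_act (quot_D (c *: m + n))
  ([seq (c *: p.1, p.2) | p <- quot_D m] ++ quot_D n).
Proof.
have [x <-] := pc_surj m; have [y <-] := pc_surj n; move=> V b bb.
have bpc := Hbalanced_pc bb.
rewrite -subproj_linear sumr_cat (big_scale_fst bb.1.1) !(big_quot_D bb).
by rewrite (Delta_lin HB c x y bpc) sumr_cat (big_scale_fst bpc.1.1).
Qed.

Lemma quot_D_act h m : tM s t quot_act (quot_D (quot_act h m))
  [seq (quot_act p.1 q.1, quot_act p.2 q.2) | p <- Delta h, q <- quot_D m].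
Proof.
have [x <-] := pc_surj m; move=> V b bb.
have bpc := Hbalanced_pc bb.
have hx : I (h * rp (pc x) - h * x) by rewrite -mulrBr; apply: IM; apply: subrepr_proj.
rewrite quot_actE (big_quot_D bb) -(big_Delta_congr bpc (Hbalanced_pc_vanish bb) hx).
rewrite (Delta_mul HB h (rp (pc x)) bpc) !big_allpairs_dep /=.
apply: eq_bigr => p _; rewrite big_map; apply: eq_bigr => q _ /=.
by rewrite !quot_actE.
Qed.

Lemma quot_D_coassoc m : tM3 s t quot_act
  [seq (q.1, q.2, p.2) | p <- quot_D m, q <- quot_D p.1]
  [seq (p.1, q.1, q.2) | p <- quot_D m, q <- quot_D p.2].
Proof.
move=> V g gb.
have gpc := Hbalanced3_comp (subproj_linear _) (fun h x => esym (quot_actE h x)) gb.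
have coassoc := Delta_coassoc HB (rp m) gpc.
rewrite !big_allpairs_dep /= in coassoc.
rewrite !big_allpairs_dep [quot_D m]/quot_D !big_map /=.
transitivity
  (\sum_(p <- Delta (rp m)) \sum_(q <- Delta p.1) g (pc q.1) (pc q.2) (pc p.2)).
  by apply: eq_bigr => p _; apply: (big_quot_D (Hbalanced3_fix3 gb _)).
rewrite coassoc; apply: eq_bigr => p _.
by rewrite (big_quot_D (Hbalanced3_fix1 gb _)).
Qed.

Lemma quot_counitl m : \sum_(p <- quot_D m) quot_act (s (quot_eps p.1)) p.2 = m.
Proof.
rewrite big_map /=; under eq_bigr do rewrite quot_epsE quot_actE.
by rewrite -(klinear_sum (subproj_linear _)) (Delta_counitl HB) subreprK.
Qed.

Lemma quot_counitr m : \sum_(p <- quot_D m) quot_act (t (quot_eps p.2)) p.1 = m.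
Proof.
rewrite big_map /=; under eq_bigr do rewrite quot_epsE quot_actE.
by rewrite -(klinear_sum (subproj_linear _)) (Delta_counitr HB) subreprK.
Qed.

Lemma quotient_is_qmc : is_qmc s t Delta eps quot_act pc quot_D quot_eps.
Proof.
constructor.
- exact: quot_act_Hmod.
- exact: quot_D_linear.
- exact: quot_D_act.
- move=> c m n; have [x <-] := pc_surj m; have [y <-] := pc_surj n.
  by rewrite -subproj_linear !quot_epsE (eps_lin HB).
- by move=> h m; have [x <-] := pc_surj m; rewrite quot_actE !quot_epsE (eps_s HB).
- exact: quot_D_coassoc.
- exact: quot_counitl.
- exact: quot_counitr.
- exact: subproj_linear.
- by move=> h x; rewrite quot_actE.
- exact: pc_surj.
- by move=> x V b bb; rewrite (big_quot_D bb) big_map.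
- exact: quot_epsE.
Qed.

Definition quotient_qmc : qmc s t Delta eps := QMC quotient_is_qmc.

Lemma qker_quotient_qmc x : qker quotient_qmc x <-> I x.
Proof. exact: subproj_ker. Qed.

End QuotientByCoideal.

Lemma lid_coideal_qker (k : fieldType) (A H : algType k) (s t : A -> H)
    (Delta : H -> seq (H * H)) (eps : H -> A)
    (HB : is_left_bialgebroid s t Delta eps) (I : H -> Prop) :
  is_lid_coideal s t Delta eps I ->
  exists Q : qmc s t Delta eps, forall x, qker Q x <-> I x.
Proof.
case=> I0 [IB [IM [I_eps I_coideal]]].
by exists (quotient_qmc HB I0 IB IM I_eps I_coideal); apply: qker_quotient_qmc.
Qed.

Section QmcIsomorphism.
Variables (k : fieldType) (A H : algType k) (s t : A -> H)
  (Delta : H -> seq (H * H)) (eps : H -> A).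
Variables Q1 Q2 : qmc s t Delta eps.
Hypothesis qker_sub : forall x, qker Q1 x -> qker Q2 x.

Definition qmc_factor (m : qcar Q1) : qcar Q2 := qpi Q2 (qpre m).

Lemma qmc_factorE x : qmc_factor (qpi Q1 x) = qpi Q2 x.
Proof. by apply/qpi_eq/qker_sub/qpi_eq; rewrite qpreK. Qed.

Lemma qmc_factor_linear : klinear qmc_factor.
Proof.
move=> c m n; rewrite -(qpreK m) -(qpreK n) -(q_pi_lin (qax Q1)) !qmc_factorE.
exact: (q_pi_lin (qax Q2)).
Qed.

Lemma qmc_factor_act h m : qmc_factor (qact h m) = qact h (qmc_factor m).
Proof. by rewrite -(qpreK m) -(q_pi_H (qax Q1)) !qmc_factorE (q_pi_H (qax Q2)). Qed.

Lemma qmc_factor_D m : tM s t (qact (q:=Q2)) (qD (qmc_factor m))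
  [seq (qmc_factor p.1, qmc_factor p.2) | p <- qD m].
Proof.
rewrite -(qpreK m) qmc_factorE => V b bb.
rewrite (q_pi_D (qax Q2) (qpre m) bb).
rewrite (tM_map qmc_factor_linear qmc_factor_act (q_pi_D (qax Q1) (qpre m)) bb).
by rewrite -map_comp !big_map; apply: eq_bigr => p _ /=; rewrite !qmc_factorE.
Qed.

Lemma qmc_factor_eps m : qe (qmc_factor m) = qe m.
Proof. by rewrite -(qpreK m) qmc_factorE !(q_pi_e (qax _)). Qed.

End QmcIsomorphism.

Lemma qker_eq_iso (k : fieldType) (A H : algType k) (s t : A -> H)
    (Delta : H -> seq (H * H)) (eps : H -> A) (Q1 Q2 : qmc s t Delta eps) :
  (forall x, qker Q1 x <-> qker Q2 x) <-> qmc_iso Q1 Q2.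
Proof.
split=> [ker12 | [f [f_lin [f_bij [f_pi _]]]] x].
  have sub12 x : qker Q1 x -> qker Q2 x by move/ker12.
  have sub21 x : qker Q2 x -> qker Q1 x by move/ker12.
  exists (qmc_factor Q2); split; first exact: qmc_factor_linear.
  split.
    exists (qmc_factor Q1) => m; rewrite -(qpreK m).
      by rewrite (qmc_factorE sub12) (qmc_factorE sub21).
    by rewrite (qmc_factorE sub21) (qmc_factorE sub12).
  split; first exact: qmc_factorE.
  split; first exact: qmc_factor_act.
  split; first exact: qmc_factor_D.
  exact: qmc_factor_eps.
rewrite /qker -f_pi; split=> [-> | ]; first exact: klinear0.
by rewrite -(klinear0 f_lin) => /(bij_inj f_bij).
Qed.

Unset Implicit Arguments.

Theorem proposition2p3 (k : fieldType) (A H : algType k) (s t : A -> H)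
  (Delta : H -> seq (H * H)) (eps : H -> A)
  (HB : is_left_bialgebroid s t Delta eps) :
  (* ker pi is a left ideal two-sided coideal *)
  (forall Q : qmc s t Delta eps, is_lid_coideal s t Delta eps (qker Q)) /\
  (* every left ideal two-sided coideal I is the kernel of a quotient
     left H-module coring (namely H -> H/I) *)
  (forall I : H -> Prop, is_lid_coideal s t Delta eps I ->
     exists Q : qmc s t Delta eps, forall x, qker Q x <-> I x) /\
  (* two quotients are isomorphic under H iff they have the same kernel *)
  (forall Q1 Q2 : qmc s t Delta eps,
     (forall x, qker Q1 x <-> qker Q2 x) <-> qmc_iso Q1 Q2).
Proof.
split; first exact: qker_lid_coideal.
split; first exact: lid_coideal_qker.
exact: qker_eq_iso.
Qed.
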